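(* The equations (F1) $\mathsf F=\neg\mathsf T$ and (F3) $\neg\neg x=x$ are derivable in equational logic from the set $\{\text{(F2)},\text{(F4)},\text{(F5)},\text{(F6)},\text{(F7)},\text{(F9)}\}$ (i.e. from $\mathrm{EqFSCL}^-\setminus\{\text{(F8)},\text{(F10)}\}$).
   Context: Let $A$ be a nonempty set of atoms. Terms are over the signature with constants $\mathsf T,\mathsf F$, atoms $a\in A$, unary $\neg$, binary $\land^\circ$ and $\lor^\circ$. The equations are: (F2) $x\lor^\circ y=\neg(\neg x\land^\circ\neg y)$; (F4) $\mathsf T\land^\circ x=x$; (F5) $x\lor^\circ\mathsf F=x$; (F6) $\mathsf F\land^\circ x=\mathsf F$; (F7) $(x\land^\circ y)\land^\circ z=x\land^\circ(y\land^\circ z)$; (F8) $\neg x\land^\circ\mathsf F=x\land^\circ\mathsf F$; (F9) $(x\land^\circ\mathsf F)\lor^\circ y=(x\lor^\circ\mathsf T)\land^\circ y$; (F10) $(x\land^\circ y)\lor^\circ(z\land^\circ\mathsf F)=(x\lor^\circ(z\land^\circ\mathsf F))\land^\circ(y\lor^\circ(z\land^\circ\mathsf F))$. $\mathrm{EqFSCL}^-$ is the set $\{\text{(F2)},\text{(F4)},\ldots,\text{(F10)}\}$. *)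

Set Implicit Arguments.

(* Terms over the signature T, F, atoms a in A, unary neg, binary and/or
   (the left-sequential connectives), with variables indexed by nat. *)
Inductive term (A : Type) : Type :=
| Var : nat -> term A
| Tc : term A
| Fc : term A
| Atom : A -> term A
| Neg : term A -> term A
| LAnd : term A -> term A -> term A
| LOr : term A -> term A -> term A.

Arguments Tc {A}.
Arguments Fc {A}.

Fixpoint subst (A : Type) (s : nat -> term A) (t : term A) : term A :=
  match t with
  | Var _ n => s n
  | Tc => Tc
  | Fc => Fc
  | Atom a => Atom a
  | Neg u => Neg (subst s u)
  | LAnd u v => LAnd (subst s u) (subst s v)
  | LOr u v => LOr (subst s u) (subst s v)
  end.

Definition eqn (A : Type) := (term A * term A)%type.

Inductive derivable (A : Type) (E : eqn A -> Prop) : term A -> term A -> Prop :=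
| d_ax : forall l r (s : nat -> term A), E (l, r) -> derivable E (subst s l) (subst s r)
| d_refl : forall t, derivable E t t
| d_sym : forall t u, derivable E t u -> derivable E u t
| d_trans : forall t u v, derivable E t u -> derivable E u v -> derivable E t v
| d_neg : forall t u, derivable E t u -> derivable E (Neg t) (Neg u)
| d_and : forall t1 t2 u1 u2, derivable E t1 u1 -> derivable E t2 u2 ->
            derivable E (LAnd t1 t2) (LAnd u1 u2)
| d_or : forall t1 t2 u1 u2, derivable E t1 u1 -> derivable E t2 u2 ->
            derivable E (LOr t1 t2) (LOr u1 u2).

Section Eqns.
Variable A : Type.
Local Notation x := (Var A 0).
Local Notation y := (Var A 1).
Local Notation z := (Var A 2).

Definition F1 : eqn A := (Fc, Neg Tc).
Definition F2 : eqn A := (LOr x y, Neg (LAnd (Neg x) (Neg y))).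
Definition F3 : eqn A := (Neg (Neg x), x).
Definition F4 : eqn A := (LAnd Tc x, x).
Definition F5 : eqn A := (LOr x Fc, x).
Definition F6 : eqn A := (LAnd Fc x, Fc).
Definition F7 : eqn A := (LAnd (LAnd x y) z, LAnd x (LAnd y z)).
Definition F8 : eqn A := (LAnd (Neg x) Fc, LAnd x Fc).
Definition F9 : eqn A := (LOr (LAnd x Fc) y, LAnd (LOr x Tc) y).
Definition F10 : eqn A :=
  (LOr (LAnd x y) (LAnd z Fc),
   LAnd (LOr x (LAnd z Fc)) (LOr y (LAnd z Fc))).

Definition EqFSCLm (e : eqn A) : Prop :=
  e = F2 \/ e = F4 \/ e = F5 \/ e = F6 \/ e = F7 \/ e = F8 \/ e = F9 \/ e = F10.

Definition EqFSCLm_noF8F10 (e : eqn A) : Prop :=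
  e = F2 \/ e = F4 \/ e = F5 \/ e = F6 \/ e = F7 \/ e = F9.
End Eqns.

(* Write [N] for [¬F].  By (F5) and (F2), [a = a ∨ F = ¬(¬a ∧ N)] for every
   term [a]; applied twice this moves a negation across a conjunction with
   [N], [¬(b ∧ N) = ¬b ∧ N].  Feeding the constants into these two identities,
   with (F4) and (F6) evaluating [T ∧ _] and [F ∧ _], yields [T = N] and
   [F = ¬N], hence (F1).  For (F3), [¬¬x = ¬(N ∧ ¬x) = F ∨ x = (F ∧ F) ∨ x],
   and (F9) turns this into [(F ∨ T) ∧ x = T ∧ x = x]. *)

From Stdlib Require Import Setoid Morphisms.
Section Derivations.

Variables (A : Type) (E : eqn A -> Prop).

Local Notation "t ≈ u" := (derivable E t u) (at level 70).
Local Notation N := (Neg (@Fc A)).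

#[local] Instance derivable_equivalence : Equivalence (derivable E).
Proof.
  split; [exact (d_refl E) | exact (d_sym (E:=E)) | exact (d_trans (E:=E))].
Qed.

#[local] Instance Neg_proper : Proper (derivable E ==> derivable E) (@Neg A).
Proof. exact (d_neg (E:=E)). Qed.

#[local] Instance LAnd_proper :
  Proper (derivable E ==> derivable E ==> derivable E) (@LAnd A).
Proof. intros ? ? H1 ? ? H2. exact (d_and H1 H2). Qed.

#[local] Instance LOr_proper :
  Proper (derivable E ==> derivable E ==> derivable E) (@LOr A).
Proof. intros ? ? H1 ? ? H2. exact (d_or H1 H2). Qed.

Definition subst3 (a b c : term A) (n : nat) : term A :=
  match n with 0 => a | 1 => b | _ => c end.

Lemma derivable_subst3 {l r} a b c :
  E (l, r) -> subst (subst3 a b c) l ≈ subst (subst3 a b c) r.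
Proof. exact (d_ax E l r _). Qed.

Hypotheses (E_F2 : E (F2 A)) (E_F4 : E (F4 A)) (E_F5 : E (F5 A))
  (E_F6 : E (F6 A)).

Lemma or_neg_and a b : LOr a b ≈ Neg (LAnd (Neg a) (Neg b)).
Proof. exact (derivable_subst3 a b a E_F2). Qed.

Lemma and_T_l a : LAnd Tc a ≈ a.
Proof. exact (derivable_subst3 a a a E_F4). Qed.

Lemma or_F_r a : LOr a Fc ≈ a.
Proof. exact (derivable_subst3 a a a E_F5). Qed.

Lemma and_F_l a : LAnd Fc a ≈ Fc.
Proof. exact (derivable_subst3 a a a E_F6). Qed.

Lemma neg_and_N_neg a : a ≈ Neg (LAnd (Neg a) N).
Proof. now rewrite <- or_neg_and, or_F_r. Qed.

Lemma neg_and_N b : Neg (LAnd b N) ≈ LAnd (Neg b) N.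
Proof.
  now rewrite (neg_and_N_neg (LAnd (Neg b) N)), <- (neg_and_N_neg b).
Qed.

Lemma F_neg_N : Fc ≈ Neg N.
Proof. rewrite (neg_and_N_neg Fc) at 1. now rewrite <- neg_and_N, and_F_l. Qed.

Lemma T_N : Tc ≈ N.
Proof.
  rewrite (neg_and_N_neg Tc) at 1.
  now rewrite <- neg_and_N, and_T_l, <- F_neg_N.
Qed.

Lemma F_neg_T : Fc ≈ Neg Tc.
Proof. rewrite T_N. exact F_neg_N. Qed.

Hypothesis E_F9 : E (F9 A).

Lemma or_and_F_l a b : LOr (LAnd a Fc) b ≈ LAnd (LOr a Tc) b.
Proof. exact (derivable_subst3 a b a E_F9). Qed.

Lemma or_F_T : LOr Fc Tc ≈ Tc.
Proof. now rewrite or_neg_and, <- F_neg_T, <- T_N, and_T_l, T_N. Qed.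

Lemma neg_neg x : Neg (Neg x) ≈ x.
Proof.
  rewrite <- (and_T_l (Neg x)), T_N, <- or_neg_and.
  now rewrite <- (and_F_l Fc), or_and_F_l, or_F_T, and_T_l.
Qed.

End Derivations.

Theorem proposition2p7 (A : Type) (Hne : inhabited A) :
  derivable (@EqFSCLm_noF8F10 A) (fst (F1 A)) (snd (F1 A)) /\
  derivable (@EqFSCLm_noF8F10 A) (fst (F3 A)) (snd (F3 A)).
Proof.
  assert (E_F2 : EqFSCLm_noF8F10 (F2 A)) by (left; reflexivity).
  assert (E_F4 : EqFSCLm_noF8F10 (F4 A)) by (do 1 right; left; reflexivity).
  assert (E_F5 : EqFSCLm_noF8F10 (F5 A)) by (do 2 right; left; reflexivity).
  assert (E_F6 : EqFSCLm_noF8F10 (F6 A)) by (do 3 right; left; reflexivity).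
  assert (E_F9 : EqFSCLm_noF8F10 (F9 A)) by (do 5 right; reflexivity).
  split; [apply F_neg_T | apply neg_neg]; assumption.
Qed.
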